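(* Let $\ell\ge1$, $r_0,\dots,r_\ell\ge1$ integers, $d_0,\dots,d_\ell$ integers, $\mathbf{g}\ge0$ an integer, $\mu_k=d_k/r_k$, $r_V=\sum_kr_k$, $d_V=\sum_kd_k$, $\pi_R=\prod_k(r_k-1)!$, and $c>\max_k\mu_k$ real. With the integrals $\alpha_0,\alpha_j,\alpha_{jk},\beta_0,\beta_j$ defined in the context, for all $1\le j,k\le\ell$ with $j\ne k$: $\alpha_0=\frac{\pi_R}{r_V!}(cr_V-d_V)$, $\alpha_j=\frac{\pi_R}{(r_V+1)!}r_j\big(c(r_V+1)-d_V-\mu_j\big)$, $\alpha_{jk}=\frac{\pi_R}{(r_V+2)!}r_jr_k\big(c(r_V+2)-d_V-\mu_j-\mu_k\big)$, $\alpha_{jj}=\frac{\pi_R}{(r_V+2)!}r_j(r_j+1)\big(c(r_V+2)-d_V-2\mu_j\big)$, $\beta_0=\frac{\pi_R}{(r_V-1)!}\big((r_V-1)r_Vc+2(1-\mathbf{g})-(r_V-1)d_V\big)$, $\beta_j=\frac{\pi_Rr_j}{r_V!}\big(r_V(r_V-1)c+2(1-\mathbf{g})-d_V(r_V-2)-r_V\mu_j\big)$.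
   Context: $\Delta=\{x\in\mathbb{R}^\ell:L_k(x)\ge0,\ k=0,\dots,\ell\}$ with $L_j(x)=x_j$ for $1\le j\le\ell$ and $L_0(x)=1-\sum_{j=1}^\ell x_j$; $d\mu$ is Lebesgue measure on $\mathbb{R}^\ell$; on each facet $F_j=\Delta\cap\{L_j=0\}$, $d\sigma$ is the measure with $dL_j\wedge d\sigma=-d\mu$, and $\int_{\partial\Delta}$ is the sum of the integrals over the facets. $p_c(x)=\big(c-\sum_{k=0}^\ell\mu_kL_k(x)\big)\prod_{k=0}^\ell L_k(x)^{r_k-1}$ and $Q(x)=\frac{2(1-\mathbf{g})}{c-\sum_k\mu_kL_k(x)}+\sum_{k:\,r_k\ge2}\frac{r_k(r_k-1)}{L_k(x)}$. For $1\le r,s\le\ell$: $\alpha_0=\int_\Delta p_c\,d\mu$, $\alpha_r=\int_\Delta x_rp_c\,d\mu$, $\alpha_{rs}=\int_\Delta x_rx_sp_c\,d\mu$, $\beta_0=\int_\Delta Qp_c\,d\mu+\int_{\partial\Delta}p_c\,d\sigma$, $\beta_r=\int_\Delta Qx_rp_c\,d\mu+\int_{\partial\Delta}x_rp_c\,d\sigma$. *)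

From HB Require Import structures.
From mathcomp Require Import all_boot all_order all_algebra.
From mathcomp Require Import all_classical all_reals all_analysis.
Set Implicit Arguments. Unset Strict Implicit. Unset Printing Implicit Defensive.
Import Order.TTheory GRing.Theory Num.Theory.
Local Open Scope ring_scope.

Section SimplexIntegrals.
Variable R : realType.

(* Points of R^l are encoded as functions x : nat -> R, the coordinate x_j
   (1 <= j <= l) being x j; other indices are irrelevant. *)
Definition upd (x : nat -> R) (i : nat) (t : R) : nat -> R :=
  fun k => if k == i then t else x k.

(* Lebesgue integral over R^n computed as an iterated one-dimensional
   Lebesgue integral (Fubini): coordinate n innermost, coordinate 1 outermost. *)
Fixpoint iint (n : nat) (F : (nat -> R) -> R) : R :=
  match n with
  | 0 => F (fun _ => 0)
  | m.+1 => iint m (fun x => Rintegral (@lebesgue_measure R) setT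
                               (fun t => F (upd x m.+1 t)))
  end.

Definition Lk (l k : nat) (x : nat -> R) : R :=
  if k == 0%N then 1 - \sum_(1 <= j < l.+1) x j else x k.

Definition in_simplex (l : nat) (x : nat -> R) : bool :=
  [forall k : 'I_l.+1, 0 <= Lk l k x].

Definition simplex_int (l : nat) (f : (nat -> R) -> R) : R :=
  iint l (fun x => if in_simplex l x then f x else 0).

(* Parametrization of the hyperplane {L_j = 0} by R^(l-1):
   for j >= 1, insert x_j = 0; for j = 0, x_i = y_i (i < l) and
   x_l = 1 - sum_{i<l} y_i. In both cases the measure sigma with
   dL_j /\ dsigma = -dmu is (as a positive measure) the pushforward of
   Lebesgue measure on R^(l-1) by this parametrization. *)
Definition facet_pt (l j : nat) (y : nat -> R) : nat -> R :=
  if j == 0%N then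
    (fun i => if i == l then 1 - \sum_(1 <= i0 < l) y i0 else y i)
  else (fun i => if (i < j)%N then y i else if i == j then 0 else y i.-1).

Definition facet_int (l j : nat) (f : (nat -> R) -> R) : R :=
  iint l.-1 (fun y => let x := facet_pt l j y in
                      if in_simplex l x then f x else 0).

Definition boundary_int (l : nat) (f : (nat -> R) -> R) : R :=
  \sum_(0 <= j < l.+1) facet_int l j f.

Definition muk (r : nat -> nat) (d : nat -> int) (k : nat) : R :=
  (d k)%:~R / (r k)%:R.

Definition pc (l : nat) (r : nat -> nat) (d : nat -> int) (c : R)
  (x : nat -> R) : R :=
  (c - \sum_(0 <= k < l.+1) muk r d k * Lk l k x)
  * \prod_(0 <= k < l.+1) Lk l k x ^+ (r k).-1.

Definition Qf (l : nat) (r : nat -> nat) (d : nat -> int) (g : nat) (c : R)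
  (x : nat -> R) : R :=
  2 * (1 - g%:R) / (c - \sum_(0 <= k < l.+1) muk r d k * Lk l k x)
  + \sum_(0 <= k < l.+1 | (2 <= r k)%N) ((r k * (r k - 1))%:R / Lk l k x).

Definition alpha0 l r d c : R := simplex_int l (pc l r d c).
Definition alpha1 l r d c (j : nat) : R :=
  simplex_int l (fun x => x j * pc l r d c x).
Definition alpha2 l r d c (j k : nat) : R :=
  simplex_int l (fun x => x j * x k * pc l r d c x).
Definition beta0 l r d g c : R :=
  simplex_int l (fun x => Qf l r d g c x * pc l r d c x)
  + boundary_int l (pc l r d c).
Definition beta1 l r d g c (j : nat) : R :=
  simplex_int l (fun x => Qf l r d g c x * x j * pc l r d c x)
  + boundary_int l (fun x => x j * pc l r d c x).

End SimplexIntegrals.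

From HB Require Import structures.
From mathcomp Require Import all_boot all_order all_algebra.
From mathcomp Require Import all_classical all_reals all_analysis.
From mathcomp Require Import ring lra zify.
Import Order.TTheory GRing.Theory Num.Theory.
Import numFieldNormedType.Exports.
Local Open Scope ring_scope.

(* On the simplex every integrand of the statement is a linear combination of
   monomials prod_k L_k^(a_k), and the restriction of such a monomial to the
   facet F_j is 0 if a_j > 0 and a monomial of F_j, itself a simplex of one
   dimension less, if a_j = 0.  Everything thus reduces to the Dirichlet
   integral
     int_Delta prod_k L_k^(a_k) dmu = prod_k a_k! / (sum_k a_k + l)!,
   obtained by integrating out the last coordinate: with s the value of L_0 on
   the remaining coordinates, this step is the Beta integral
     int_0^s (s - t)^p t^q dt = p! q! s^(p+q+1) / (p+q+1)!.
   The pole r_k (r_k - 1) / L_k of Q is cancelled by the factor L_k^(r_k - 1)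
   of p_c, and the k-th pole term of int Q p_c and the boundary term
   int_(F_k) p_c (nonzero only when r_k = 1) are multiples of one and the same
   closed expression [facet_moment]. *)

Lemma fact_neq0 {R : numDomainType} n : (n`!)%:R != 0 :> R.
Proof. by rewrite pnatr_eq0 -lt0n fact_gt0. Qed.

Lemma big_nat_first_last {T : Type} (idx : T) (op : Monoid.law idx) m
    (F : nat -> T) :
  \big[op/idx]_(0 <= k < m.+2) F k
  = op (F 0%N) (op (\big[op/idx]_(1 <= k < m.+1) F k) (F m.+1)).
Proof. by rewrite big_ltn // big_nat_recr. Qed.

Lemma big_nat_D1 {T : Type} (idx : T) (op : Monoid.com_law idx) n j
    (F : nat -> T) : (j <= n)%N ->
  \big[op/idx]_(0 <= k < n.+1) F k
  = op (F j) (\big[op/idx]_(0 <= k < n.+1 | k != j) F k).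
Proof. by move=> jn; rewrite (bigD1_seq j) ?mem_index_iota ?iota_uniq. Qed.

Lemma sum_subr_delta {R : pzRingType} n j (w F : nat -> R) : (j <= n)%N ->
  \sum_(0 <= k < n.+1) (w k - (k == j)%:R) * F k
  = \sum_(0 <= k < n.+1) w k * F k - F j.
Proof.
move=> jn; under eq_bigr do rewrite mulrBl.
rewrite sumrB [X in _ - X](big_nat_D1 _ _ _ _ _ jn) /= eqxx mul1r.
by rewrite [X in F j + X]big1 ?addr0 // => k /negbTE->; rewrite mul0r.
Qed.

Section BetaIntegral.
Local Open Scope classical_set_scope.
Context {R : realType}.
Local Notation mu := (@lebesgue_measure R).

Definition beta_coef (p q : nat) : R := (p`! * q`!)%:R / ((p + q).+1`!)%:R.

Lemma beta_coef0n q : beta_coef 0 q = q.+1%:R^-1.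
Proof.
rewrite /beta_coef fact0 mul1n add0n factS natrM.
by field; rewrite fact_neq0 andbT nat1r pnatr_eq0.
Qed.

Lemma beta_coefSn p q : beta_coef p.+1 q = beta_coef p q - beta_coef p q.+1.
Proof.
rewrite /beta_coef addSn addnS !factS !natrM !mulrS !natrD.
have hF := @fact_neq0 R (p + q).
have hpq : 0 <= p%:R + q%:R :> R by rewrite addr_ge0.
by field; rewrite hF /= !lt0r_neq0 //; lra.
Qed.

Lemma continuous_beta_kernel (s : R) p q :
  continuous (fun t : R => (s - t) ^+ p * t ^+ q).
Proof.
move=> t; apply: cvgM; last exact: exprn_continuous.
apply: (@continuous_comp _ _ _ (fun t => s - t) (fun x => x ^+ p)).
  by apply: (@cvgB _ R^o); [exact: cvg_cst|exact: cvg_id].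
exact: exprn_continuous.
Qed.

Lemma continuous_beta_sum {I : Type} (s : R) (rs : seq I) (w : I -> R)
    (p q : I -> nat) :
  continuous (fun t : R => \sum_(i <- rs) w i * ((s - t) ^+ p i * t ^+ q i)).
Proof.
apply: continuous_big => [|i _ t]; first exact: add_continuous.
by apply: cvgM; [exact: cvg_cst|exact: continuous_beta_kernel].
Qed.

Lemma integrable_itv_continuous (a b : R) (f : R -> R) : continuous f ->
  mu.-integrable `[a, b] (EFin \o f).
Proof.
move=> cf; apply: continuous_compact_integrable; first exact: segment_compact.
exact/continuous_subspaceT.
Qed.

Lemma Rintegral_itv0_pow (s : R) p : 0 <= s ->
  \int[mu]_(t in `[0, s]) (t ^+ p) = s ^+ p.+1 / p.+1%:R.
Proof.
rewrite le_eqVlt => /predU1P[<-|s0].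
  by rewrite set_itv1 Rintegral_set1 expr0n mul0r.
rewrite /Rintegral (@continuous_FTC2 _ _ (fun t => t ^+ p.+1 / p.+1%:R)) //=.
- by rewrite expr0n /= mul0r subr0.
- by apply: continuous_subspaceT => x; exact: exprn_continuous.
- split.
  + by move=> x _; apply: derivableM => //; exact: exprn_derivable.
  + apply: cvg_at_right_filter; apply: cvgM; last exact: cvg_cst.
    exact: exprn_continuous.
  + apply: cvg_at_left_filter; apply: cvgM; last exact: cvg_cst.
    exact: exprn_continuous.
- move=> x _; rewrite derive1Mr; last exact: exprn_derivable.
  rewrite derive1E exp_derive scaler1 /=.
  by rewrite mulrAC -mulr_natr divff ?mul1r // pnatr_eq0.
Qed.

Lemma Rintegral_beta (s : R) p q : 0 <= s ->
  \int[mu]_(t in `[0, s]) ((s - t) ^+ p * t ^+ q)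
  = beta_coef p q * s ^+ (p + q).+1.
Proof.
move=> s0; elim: p q => [|p IHp] q.
  under eq_Rintegral do rewrite expr0 mul1r.
  by rewrite Rintegral_itv0_pow // beta_coef0n mulrC.
transitivity (\int[mu]_(t in `[0, s])
    (s * ((s - t) ^+ p * t ^+ q) - (s - t) ^+ p * t ^+ q.+1)).
  by apply: eq_Rintegral => t _; rewrite !exprS; ring.
rewrite RintegralB //; first last.
- exact/integrable_itv_continuous/continuous_beta_kernel.
- by apply: integrable_itv_continuous => t; apply: cvgM;
    [exact: cvg_cst|exact: continuous_beta_kernel].
rewrite RintegralZl; last 2 first.
- by [].
- exact/integrable_itv_continuous/continuous_beta_kernel.
by rewrite !IHp beta_coefSn addSn addnS [_ ^+ (p + q).+2]exprS mulrBl mulrCA.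
Qed.

Lemma Rintegral_beta_sum {I : Type} (s : R) (rs : seq I) (w : I -> R)
    (p q : I -> nat) : 0 <= s ->
  \int[mu]_(t in `[0, s]) (\sum_(i <- rs) w i * ((s - t) ^+ p i * t ^+ q i))
  = \sum_(i <- rs) w i * (beta_coef (p i) (q i) * s ^+ (p i + q i).+1).
Proof.
move=> s0; elim: rs => [|i rs IH].
  under eq_Rintegral do rewrite big_nil.
  by rewrite big_nil Rintegral_cst // mul0r.
under eq_Rintegral do rewrite big_cons.
rewrite RintegralD //; last exact/integrable_itv_continuous/continuous_beta_sum.
  by rewrite RintegralZl ?Rintegral_beta ?IH ?big_cons //;
    exact/integrable_itv_continuous/continuous_beta_kernel.
by apply: integrable_itv_continuous => t; apply: cvgM;
  [exact: cvg_cst|exact: continuous_beta_kernel].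
Qed.

Lemma Rintegral_itv_ends (s : R) (b0 b1 : bool) (f : R -> R) :
  mu.-integrable `[0, s] (EFin \o f) ->
  \int[mu]_(t in [set` Interval (BSide b0 0) (BSide b1 s)]) f t
  = \int[mu]_(t in `[0, s]) f t.
Proof.
move=> intf.
have sub b b' : [set` Interval (BSide b 0) (BSide b' s)] `<=` `[0, s].
  by apply: subset_itvScc; case: b; case: b'; rewrite bnd_simp.
have intS b b' :
    mu.-integrable [set` Interval (BSide b 0) (BSide b' s)] (EFin \o f).
  by apply: integrableS intf => //; exact: sub.
case: b0; case: b1 => //.
- by rewrite Rintegral_itv_bndo_bndc.
- by rewrite Rintegral_itv_bndo_bndc // Rintegral_itv_obnd_cbnd.
- by rewrite Rintegral_itv_obnd_cbnd.
Qed.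

Lemma Rintegral_beta_sum_between {I : Type} (s : R) (C0 C1 : bool) (rs : seq I)
    (w : I -> R) (p q : I -> nat) : 0 <= s ->
  \int[mu]_t (if (0 < s - t ?<= if C0) && (0 < t ?<= if C1)
              then \sum_(i <- rs) w i * ((s - t) ^+ p i * t ^+ q i) else 0)
  = \sum_(i <- rs) w i * (beta_coef (p i) (q i) * s ^+ (p i + q i).+1).
Proof.
move=> s0.
pose f t := \sum_(i <- rs) w i * ((s - t) ^+ p i * t ^+ q i).
transitivity
  (\int[mu]_t (f \_ [set` Interval (BSide C1 0) (BSide (~~ C0) s)]) t).
  apply: eq_Rintegral => t _.
  by rewrite patchE mem_setE in_itv /= subr_lteif0r negbK andbC.
rewrite -Rintegral_mkcond Rintegral_itv_ends ?Rintegral_beta_sum //.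
exact/integrable_itv_continuous/continuous_beta_sum.
Qed.

End BetaIntegral.

Section DirichletIntegral.
Context {R : realType}.
Local Notation mu := (@lebesgue_measure R).

Definition Lmonomial n (a : nat -> nat) (x : nat -> R) : R :=
  \prod_(0 <= k < n.+1) Lk n k x ^+ a k.

Definition Lpoly n (s : seq (R * (nat -> nat))) (x : nat -> R) : R :=
  \sum_(p <- s) p.1 * Lmonomial n p.2 x.

Definition factprod n (a : nat -> nat) : nat := \prod_(0 <= k < n.+1) (a k)`!.

Definition totdeg n (a : nat -> nat) : nat := \sum_(0 <= k < n.+1) a k.

Definition dirichlet n (a : nat -> nat) : R :=
  (factprod n a)%:R / ((totdeg n a + n)`!)%:R.

Definition Lpoly_dirichlet n (s : seq (R * (nat -> nat))) : R :=
  \sum_(p <- s) p.1 * dirichlet n p.2.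

Definition in_simplex_closed_at n (C : pred nat) (x : nat -> R) : bool :=
  \big[andb/true]_(0 <= k < n.+1) (0 < Lk n k x ?<= if C k).

Lemma in_simplex_closed_atP n C (x : nat -> R) :
  reflect (forall k, (k <= n)%N -> 0 < Lk n k x ?<= if C k)
          (in_simplex_closed_at n C x).
Proof.
rewrite /in_simplex_closed_at big_all; apply: (iffP allP) => h k.
  by move=> kn; apply: h; rewrite mem_index_iota.
by rewrite mem_index_iota => /andP[_ /h].
Qed.

Lemma in_simplexE n (x : nat -> R) :
  in_simplex n x = in_simplex_closed_at n predT x.
Proof. by rewrite /in_simplex_closed_at big_mkord big_andE. Qed.

Lemma LkE n k (x : nat -> R) : (0 < k)%N -> Lk n k x = x k.
Proof. by case: k. Qed.

Lemma Lk00 (x : nat -> R) : Lk 0 0 x = 1.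
Proof. by rewrite /Lk big_geq // subr0. Qed.

Lemma sum_Lk n (x : nat -> R) : \sum_(0 <= k < n.+1) Lk n k x = 1.
Proof.
rewrite big_ltn // [Lk n 0 x]/Lk /= (@eq_big_nat _ _ _ 1 n.+1 _ x) ?subrK //.
by move=> k /andP[k0 _]; rewrite LkE.
Qed.

Lemma Lk0_upd m (x : nat -> R) t : Lk m.+1 0 (upd x m.+1 t) = Lk m 0 x - t.
Proof.
rewrite /Lk /= big_nat_recr //= /upd eqxx (@eq_big_nat _ _ _ 1 m.+1 _ x).
  by rewrite opprD addrA.
by move=> j /andP[_ jm]; rewrite ifF //; apply/negbTE; rewrite neq_ltn jm.
Qed.

Lemma Lk_upd m (x : nat -> R) t k : (0 < k <= m)%N ->
  Lk m.+1 k (upd x m.+1 t) = Lk m k x.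
Proof.
move=> /andP[k0 km]; rewrite !LkE // /upd ifF //.
by apply/negbTE; rewrite neq_ltn ltnS km.
Qed.

Lemma Lk_upd_last m (x : nat -> R) t : Lk m.+1 m.+1 (upd x m.+1 t) = t.
Proof. by rewrite LkE // /upd eqxx. Qed.

Lemma in_simplex_closed_at_upd m C (x : nat -> R) t :
  in_simplex_closed_at m.+1 C (upd x m.+1 t) =
  (0 < Lk m 0 x - t ?<= if C 0%N)
  && (\big[andb/true]_(1 <= k < m.+1) (0 < Lk m k x ?<= if C k)
      && (0 < t ?<= if C m.+1)).
Proof.
rewrite /in_simplex_closed_at big_nat_first_last Lk0_upd Lk_upd_last.
by congr (_ && (_ && _)); apply: eq_big_nat => k hk; rewrite Lk_upd.
Qed.

Lemma Lmonomial_upd m a (x : nat -> R) t :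
  Lmonomial m.+1 a (upd x m.+1 t)
  = (Lk m 0 x - t) ^+ a 0%N
    * (\prod_(1 <= k < m.+1) Lk m k x ^+ a k * t ^+ a m.+1).
Proof.
rewrite /Lmonomial big_nat_first_last Lk0_upd Lk_upd_last.
by congr (_ * (_ * _)); apply: eq_big_nat => k hk; rewrite Lk_upd.
Qed.

(* Integrating out x_(m+1), on which L_0 = s - t and L_(m+1) = t, turns
   L_0^a_0 L_(m+1)^a_(m+1) into a multiple of L_0^(a_0 + a_(m+1) + 1). *)
Definition merge_last m (a : nat -> nat) : nat -> nat :=
  fun k => if k == 0%N then (a 0%N + a m.+1).+1 else a k.

Lemma merge_last0 m a : merge_last m a 0%N = (a 0%N + a m.+1).+1.
Proof. by []. Qed.

Lemma merge_last_inner m a k : (0 < k)%N -> merge_last m a k = a k.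
Proof. by case: k. Qed.

Lemma Lmonomial_merge_last m a (x : nat -> R) :
  Lmonomial m (merge_last m a) x
  = Lk m 0 x ^+ (a 0%N + a m.+1).+1 * \prod_(1 <= k < m.+1) Lk m k x ^+ a k.
Proof.
rewrite /Lmonomial big_ltn // merge_last0; congr (_ * _).
by apply: eq_big_nat => k /andP[k0 _]; rewrite merge_last_inner.
Qed.

Lemma factprod_merge_last m a :
  factprod m (merge_last m a)
  = ((a 0%N + a m.+1).+1`! * \prod_(1 <= k < m.+1) (a k)`!)%N.
Proof.
rewrite /factprod big_ltn // merge_last0; congr (_ * _)%N.
by apply: eq_big_nat => k /andP[k0 _]; rewrite merge_last_inner.
Qed.

Lemma totdeg_merge_last m a :
  totdeg m (merge_last m a)
  = ((a 0%N + a m.+1).+1 + \sum_(1 <= k < m.+1) a k)%N.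
Proof.
rewrite /totdeg big_ltn // merge_last0; congr (_ + _)%N.
by apply: eq_big_nat => k /andP[k0 _]; rewrite merge_last_inner.
Qed.

Definition Lpoly_merge_last m (s : seq (R * (nat -> nat))) :=
  [seq (p.1 * beta_coef (p.2 0%N) (p.2 m.+1), merge_last m p.2) | p <- s].

Lemma Rintegral_Lpoly_last m C s (x : nat -> R) :
  \int[mu]_t (if in_simplex_closed_at m.+1 C (upd x m.+1 t)
              then Lpoly m.+1 s (upd x m.+1 t) else 0)
  = if in_simplex_closed_at m C x then Lpoly m (Lpoly_merge_last m s) x else 0.
Proof.
set L0 := Lk m 0 x.
pose K := \big[andb/true]_(1 <= k < m.+1) (0 < Lk m k x ?<= if C k).
pose M a := \prod_(1 <= k < m.+1) Lk m k x ^+ a k.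
transitivity (\int[mu]_t
    (if (0 < L0 - t ?<= if C 0%N) && (K && (0 < t ?<= if C m.+1))
     then \sum_(p <- s) (p.1 * M p.2) * ((L0 - t) ^+ p.2 0%N * t ^+ p.2 m.+1)
     else 0)).
  apply: eq_Rintegral => t _.
  rewrite in_simplex_closed_at_upd; case: ifP => // _.
  by apply: eq_bigr => p _; rewrite Lmonomial_upd /M; ring.
rewrite /in_simplex_closed_at big_ltn // -/L0 -/K.
have [hK|hK] := boolP K; last first.
  under eq_Rintegral do rewrite andFb andbF.
  by rewrite andbF Rintegral_cst // mul0r.
under eq_Rintegral do rewrite andTb.
have [h0|h0] := boolP (0 < L0 ?<= if C 0%N); last first.
  transitivity (\int[mu]_(t in setT) (0 : R)); last first.
    by rewrite Rintegral_cst // mul0r.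
  apply: eq_Rintegral => t _.
  case: ifP => // /andP[h1 h2]; move: h1; rewrite subr_lteif0r => h1.
  by move: h0; rewrite (lteif_trans (lteifW h2 : 0 < t ?<= if true) h1).
rewrite Rintegral_beta_sum_between; last exact: lteifW h0.
rewrite /= /Lpoly /Lpoly_merge_last big_map; apply: eq_bigr => p _ /=.
by rewrite Lmonomial_merge_last -/L0 /M; ring.
Qed.

Lemma dirichlet_merge_last m a :
  beta_coef (a 0%N) (a m.+1) * dirichlet m (merge_last m a) = dirichlet m.+1 a.
Proof.
rewrite /dirichlet factprod_merge_last totdeg_merge_last /factprod /totdeg.
rewrite /beta_coef !big_nat_first_last.
set Q := (\sum_(1 <= k < m.+1) _)%N.
have -> : ((a 0%N + a m.+1).+1 + Q + m = a 0%N + (Q + a m.+1) + m.+1)%N by lia.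
have hU := @fact_neq0 R (a 0%N + a m.+1).+1.
have hV := @fact_neq0 R (a 0%N + (Q + a m.+1) + m.+1).
(* Opaque factorials: natrM would unfold [n.+1`!] into a product. *)
move: hU hV; set U := _`!; set V := _`! => hU hV; clearbody U V.
by rewrite !natrM; field; rewrite hU hV.
Qed.

Theorem iint_Lpoly n C s :
  iint n (fun x => if in_simplex_closed_at n C x then Lpoly n s x else 0)
  = Lpoly_dirichlet n s.
Proof.
elim: n s => [|m IH] s /=.
  rewrite /in_simplex_closed_at big_nat1 Lk00 ifT; last exact: lteifS ltr01.
  rewrite /Lpoly /Lpoly_dirichlet; apply: eq_bigr => p _.
  rewrite /Lmonomial /dirichlet /factprod /totdeg !big_nat1 Lk00 expr1n addn0.
  by rewrite divff ?fact_neq0.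
under [X in iint m X]funext do rewrite Rintegral_Lpoly_last.
rewrite IH /Lpoly_dirichlet big_map; apply: eq_bigr => p _ /=.
by rewrite -mulrA dirichlet_merge_last.
Qed.

Lemma simplex_int_Lpoly n s : simplex_int n (Lpoly n s) = Lpoly_dirichlet n s.
Proof.
rewrite /simplex_int -(iint_Lpoly n predT).
by congr (iint n _); apply/funext => x; rewrite in_simplexE.
Qed.

End DirichletIntegral.

Section FacetIntegral.
Context {R : realType}.

(* [facet_pt m.+1 j] maps R^m onto the facet F_j of the (m+1)-simplex, and
   L_(facet_index m j k) restricted to F_j is L_k of the m-simplex. *)
Definition facet_index (m j k : nat) : nat :=
  if j == 0%N then (if k == 0%N then m.+1 else k) else bump j k.

Lemma facet_indexE m j k : (0 < j)%N -> facet_index m j k = bump j k.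
Proof. by case: j. Qed.

Lemma big_facet_index {T : Type} (idx : T) (op : Monoid.com_law idx) m j
    (F : nat -> T) : (j <= m.+1)%N ->
  \big[op/idx]_(0 <= k < m.+2) F k
  = op (F j) (\big[op/idx]_(0 <= k < m.+1) F (facet_index m j k)).
Proof.
move=> jm; case: (posnP j) => [->|j0].
  rewrite big_nat_first_last [in RHS]big_ltn //.
  rewrite [X in op _ X = _]Monoid.mulmC.
  by congr (op _ (op _ _)); apply: eq_big_nat => k /andP[]; case: k.
rewrite !big_mkord (bigD1_ord (Ordinal (jm : (j < m.+2)%N))) //=.
by congr (op _ _); apply: eq_bigr => k _; rewrite facet_indexE.
Qed.

Lemma facet_pt_bump m j (y : nat -> R) k : (0 < j)%N ->
  facet_pt m.+1 j y (bump j k) = y k.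
Proof.
move=> j0; rewrite /facet_pt ifF; last by case: j j0.
rewrite /bump; case: (leqP j k) => h /=.
  rewrite add1n ifF; last by apply/negbTE; rewrite -leqNgt; apply: leqW.
  by rewrite ifF //; apply/negbTE; rewrite neq_ltn ltnS h orbT.
by rewrite add0n h.
Qed.

Lemma facet_pt_self m j (y : nat -> R) : (0 < j)%N -> facet_pt m.+1 j y j = 0.
Proof. by move=> j0; rewrite /facet_pt ifF ?ltnn ?eqxx //; case: j j0. Qed.

Lemma sum_facet_pt m j (y : nat -> R) : (0 < j <= m.+1)%N ->
  \sum_(1 <= i < m.+2) facet_pt m.+1 j y i = \sum_(1 <= i < m.+1) y i.
Proof.
move=> /andP[j0 jm]; apply: (addrI (y 0%N)).
have y0 : facet_pt m.+1 j y 0 = y 0%N.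
  by rewrite -[in LHS](_ : bump j 0 = 0%N) ?facet_pt_bump // /bump leqNgt j0.
rewrite -[in LHS]y0 -!big_ltn // (big_facet_index _ _ _ _ _ jm) /=.
rewrite facet_pt_self //.
by rewrite add0r; apply: eq_bigr => k _; rewrite facet_indexE // facet_pt_bump.
Qed.

Lemma Lk_facet_pt_self m j (y : nat -> R) : (j <= m.+1)%N ->
  Lk m.+1 j (facet_pt m.+1 j y) = 0.
Proof.
move=> jm; case: (posnP j) => [->|j0]; last by rewrite LkE // facet_pt_self.
rewrite /Lk /= big_nat_recr //= /facet_pt /= eqxx.
rewrite (@eq_big_nat _ _ _ 1 m.+1 _ y).
  by rewrite addrC subrK subrr.
by move=> i /andP[_ im]; rewrite ifF //; apply/negbTE; rewrite neq_ltn im.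
Qed.

Lemma Lk_facet_pt m j (y : nat -> R) k : (j <= m.+1)%N -> (k <= m)%N ->
  Lk m.+1 (facet_index m j k) (facet_pt m.+1 j y) = Lk m k y.
Proof.
move=> jm km; case: (posnP j) => [->|j0].
  rewrite /facet_index /=; case: (posnP k) => [->|k0] /=.
    by rewrite LkE // /facet_pt /= eqxx.
  by rewrite !LkE // /facet_pt /= ifF //; apply/negbTE; rewrite neq_ltn ltnS km.
rewrite facet_indexE //; case: (posnP k) => [->|k0].
  by rewrite /bump leqNgt j0 /Lk /= sum_facet_pt // j0 jm.
rewrite !LkE ?facet_pt_bump //.
by rewrite /bump; case: k k0 {km} => // k _; rewrite addnS.
Qed.

Lemma in_simplex_facet_pt m j (y : nat -> R) : (j <= m.+1)%N ->
  in_simplex m.+1 (facet_pt m.+1 j y) = in_simplex m y.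
Proof.
move=> jm; rewrite !in_simplexE /in_simplex_closed_at.
rewrite (big_facet_index _ _ _ _ _ jm).
rewrite Lk_facet_pt_self //= lexx andTb.
by apply: eq_big_nat => k /andP[_ km]; rewrite Lk_facet_pt.
Qed.

Lemma Lmonomial_facet_pt m j a (y : nat -> R) : (j <= m.+1)%N ->
  Lmonomial m.+1 a (facet_pt m.+1 j y)
  = (a j == 0%N)%:R * Lmonomial m (fun k => a (facet_index m j k)) y.
Proof.
move=> jm; rewrite /Lmonomial (big_facet_index _ _ _ _ _ jm) /=.
rewrite Lk_facet_pt_self // expr0n; congr (_ * _).
by apply: eq_big_nat => k /andP[_ km]; rewrite Lk_facet_pt.
Qed.

Definition Lpoly_facet m j (s : seq (R * (nat -> nat))) :=
  [seq ((p.2 j == 0%N)%:R * p.1, fun k => p.2 (facet_index m j k)) | p <- s].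

Lemma Lpoly_facet_pt m j s (y : nat -> R) : (j <= m.+1)%N ->
  Lpoly m.+1 s (facet_pt m.+1 j y) = Lpoly m (Lpoly_facet m j s) y.
Proof.
move=> jm; rewrite /Lpoly /Lpoly_facet big_map; apply: eq_bigr => p _ /=.
by rewrite Lmonomial_facet_pt // mulrCA mulrA.
Qed.

Lemma facet_int_Lpoly m j (s : seq (R * (nat -> nat))) : (j <= m.+1)%N ->
  facet_int m.+1 j (Lpoly m.+1 s)
  = \sum_(p <- s) (p.2 j == 0%N)%:R * p.1
                  * ((factprod m.+1 p.2)%:R / ((totdeg m.+1 p.2 + m)`!)%:R).
Proof.
move=> jm; rewrite /facet_int /=.
under [X in iint m X]funext do rewrite in_simplex_facet_pt // Lpoly_facet_pt //.
under [X in iint m X]funext do rewrite in_simplexE.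
rewrite iint_Lpoly /Lpoly_dirichlet /Lpoly_facet big_map.
apply: eq_bigr => p _ /=.
have [aj0|] := eqVneq (p.2 j) 0%N; last by rewrite !mul0r.
by rewrite /dirichlet /factprod /totdeg !(big_facet_index _ _ _ _ _ jm) /= aj0
  fact0 mul1n add0n.
Qed.

End FacetIntegral.

Section LinearFactor.
Context {R : realType}.
Variables (mu : nat -> R) (c : R).

Definition incr_at (b : nat -> nat) j : nat -> nat :=
  fun k => if k == j then (b k).+1 else b k.

Definition decr_at (b : nat -> nat) j : nat -> nat :=
  fun k => if k == j then (b k).-1 else b k.

Lemma incr_at_decr_at b k : (0 < b k)%N -> incr_at (decr_at b k) k = b.
Proof.
move=> bk; apply/funext => i; rewrite /incr_at /decr_at.
by case: eqP => [->|]; rewrite ?eqxx ?prednK.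
Qed.

Lemma big_incr_at {T : Type} (idx : T) (op : Monoid.com_law idx) n j
    (F : nat -> nat -> T) b : (j <= n)%N ->
  \big[op/idx]_(0 <= k < n.+1) F k (incr_at b j k)
  = op (F j (b j).+1) (\big[op/idx]_(0 <= k < n.+1 | k != j) F k (b k)).
Proof.
move=> jn; rewrite (big_nat_D1 _ _ _ _ _ jn) /incr_at eqxx.
by congr (op _ _); apply: eq_bigr => k /negbTE ->.
Qed.

Lemma Lmonomial_incr_at n b j (x : nat -> R) : (j <= n)%N ->
  Lmonomial n (incr_at b j) x = Lk n j x * Lmonomial n b x.
Proof.
move=> jn; rewrite /Lmonomial.
rewrite (big_incr_at _ _ _ _ (fun k e => Lk n k x ^+ e) _ jn).
by rewrite (big_nat_D1 _ _ _ _ _ jn) /= exprS mulrA.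
Qed.

Lemma factprod_incr_at n b j : (j <= n)%N ->
  factprod n (incr_at b j) = ((b j).+1 * factprod n b)%N.
Proof.
move=> jn; rewrite /factprod (big_incr_at _ _ _ _ (fun _ e => e`!) _ jn).
by rewrite (big_nat_D1 _ _ _ _ _ jn) /= factS mulnA.
Qed.

Lemma totdeg_incr_at n b j : (j <= n)%N ->
  totdeg n (incr_at b j) = (totdeg n b).+1.
Proof.
move=> jn; rewrite /totdeg (big_incr_at _ _ _ _ (fun _ e => e) _ jn).
by rewrite (big_nat_D1 _ _ _ _ _ jn) /= addSn.
Qed.

Definition mu_weight n (b : nat -> nat) : R :=
  \sum_(0 <= k < n.+1) mu k * (b k).+1%:R.

Lemma mu_weight_incr_at n b j : (j <= n)%N ->
  mu_weight n (incr_at b j) = mu_weight n b + mu j.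
Proof.
move=> jn; rewrite /mu_weight.
rewrite (big_incr_at _ _ _ _ (fun k e => mu k * e.+1%:R) _ jn).
by rewrite (big_nat_D1 _ _ _ _ _ jn) /= -[(b j).+2]addn1 natrD; ring.
Qed.

Definition pc_lin n (x : nat -> R) : R :=
  c - \sum_(0 <= k < n.+1) mu k * Lk n k x.

Lemma pc_lin_gt0 n (x : nat -> R) : (forall k, (k <= n)%N -> mu k < c) ->
  in_simplex n x -> 0 < pc_lin n x.
Proof.
move=> hc; rewrite in_simplexE => /in_simplex_closed_atP hL.
have pos k : k \in index_iota 0 n.+1 -> 0 <= (c - mu k) * Lk n k x.
  rewrite mem_index_iota => /andP[_ kn].
  by apply: mulr_ge0; [rewrite subr_ge0 ltW // hc | exact: hL].
have -> : pc_lin n x = \sum_(0 <= k < n.+1) (c - mu k) * Lk n k x.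
  rewrite /pc_lin -[c in c - _]mulr1 -(sum_Lk n x) mulr_sumr -sumrB.
  by apply: eq_bigr => k _; rewrite mulrBl.
rewrite lt0r big_seq sumr_ge0 ?andbT // psumr_neq0 //.
have := oner_neq0 R; rewrite -(sum_Lk n x) big_seq psumr_neq0; last first.
  by move=> k; rewrite mem_index_iota => kn; apply: hL.
move=> /hasP[k kn /andP[_ Lk_gt0]]; apply/hasP; exists k => //.
rewrite kn mulr_gt0 // subr_gt0 hc //.
by move: kn; rewrite mem_index_iota.
Qed.

Definition lin_times n (b : nat -> nat) : seq (R * (nat -> nat)) :=
  (c, b) :: [seq (- mu i, incr_at b i) | i <- index_iota 0 n.+1].

Lemma Lpoly_lin_times n b (x : nat -> R) :
  Lpoly n (lin_times n b) x = pc_lin n x * Lmonomial n b x.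
Proof.
rewrite /Lpoly /lin_times big_cons big_map /= /pc_lin mulrBl mulr_suml -sumrN.
congr (_ + _); rewrite big_seq [RHS]big_seq; apply: eq_bigr => i.
rewrite mem_index_iota => /andP[_ hi].
by rewrite Lmonomial_incr_at // mulNr mulrA.
Qed.

Definition lin_moment (P N : nat) (D : R) : R :=
  P%:R / (N`!)%:R * (c * N%:R - D).

Lemma lin_momentS P N D :
  lin_moment P N.+1 D = c * (P%:R / (N`!)%:R) - D * (P%:R / (N.+1`!)%:R).
Proof.
rewrite /lin_moment factS natrM.
have hN := @fact_neq0 R N.
by field; rewrite hN nat1r pnatr_eq0.
Qed.

Lemma Lpoly_dirichlet_lin_times n b :
  Lpoly_dirichlet n (lin_times n b)
  = lin_moment (factprod n b) (totdeg n b + n).+1 (mu_weight n b).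
Proof.
rewrite lin_momentS /Lpoly_dirichlet /lin_times big_cons big_map /= /mu_weight.
rewrite mulr_suml -sumrN; congr (_ + _).
rewrite big_seq [RHS]big_seq; apply: eq_bigr => i.
rewrite mem_index_iota => /andP[_ hi].
rewrite /dirichlet factprod_incr_at // totdeg_incr_at // addSn natrM; ring.
Qed.

Lemma simplex_int_lin_times n b :
  simplex_int n (fun x => pc_lin n x * Lmonomial n b x)
  = lin_moment (factprod n b) (totdeg n b + n).+1 (mu_weight n b).
Proof.
under [X in simplex_int n X]funext do rewrite -Lpoly_lin_times.
by rewrite simplex_int_Lpoly Lpoly_dirichlet_lin_times.
Qed.

Definition facet_moment n b k : R :=
  lin_moment (factprod n b) (totdeg n b + n) (mu_weight n b - mu k).

(* The left-hand side is the contribution of the pole 1/L_k of Q; compare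
   facet_int_lin_times. *)
Lemma pole_moment n b k : (k <= n)%N -> (0 < b k)%N ->
  (b k)%:R * Lpoly_dirichlet n (lin_times n (decr_at b k)) = facet_moment n b k.
Proof.
move=> kn bk; rewrite /facet_moment -[in RHS](incr_at_decr_at _ _ bk).
rewrite Lpoly_dirichlet_lin_times /lin_moment factprod_incr_at //.
rewrite totdeg_incr_at // mu_weight_incr_at // addSn natrM.
have -> : (decr_at b k k).+1 = b k by rewrite /decr_at eqxx prednK.
ring.
Qed.

Lemma facet_int_lin_times m b k : (k <= m.+1)%N ->
  facet_int m.+1 k (Lpoly m.+1 (lin_times m.+1 b))
  = (b k == 0%N)%:R * facet_moment m.+1 b k.
Proof.
move=> km; rewrite facet_int_Lpoly // /lin_times big_cons big_map /=.
have incr_at0 i : (incr_at b i k == 0%N) = (k != i) && (b k == 0%N).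
  by rewrite /incr_at; case: (k == i).
under eq_bigr do rewrite incr_at0.
have [bk0|bk0] := eqVneq (b k) 0%N; last first.
  by rewrite !mul0r add0r big1 // => i _; rewrite andbF !mul0r.
rewrite !mul1r /facet_moment addnS lin_momentS; congr (_ + _).
rewrite (big_nat_D1 _ _ _ _ _ km) eqxx /= !mul0r add0r.
rewrite /mu_weight (big_nat_D1 _ _ _ _ _ km) /= bk0 mulr1 addrC addrK.
rewrite mulr_suml -sumrN.
rewrite big_seq_cond [RHS]big_seq_cond; apply: eq_bigr => i.
rewrite mem_index_iota => /andP[/andP[_ im] ik].
rewrite eq_sym ik mul1r factprod_incr_at ?totdeg_incr_at // addSn natrM; ring.
Qed.

End LinearFactor.

Section QIntegrand.
Context {R : realType}.
Variables (r : nat -> nat) (d : nat -> int) (g : nat) (c : R).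
Local Notation mu := (muk R r d).

Definition Q_lin_times n b : seq (R * (nat -> nat)) :=
  (2 * (1 - g%:R), b) ::
  flatten [seq [seq ((r k * (r k - 1))%:R * p.1, p.2)
               | p <- lin_times mu c n (decr_at b k)]
          | k <- index_iota 0 n.+1].

Lemma Lpoly_Q_lin_times n b (x : nat -> R) :
  Lpoly n (Q_lin_times n b) x
  = 2 * (1 - g%:R) * Lmonomial n b x
    + \sum_(0 <= k < n.+1)
        (r k * (r k - 1))%:R * (pc_lin mu c n x * Lmonomial n (decr_at b k) x).
Proof.
rewrite /Lpoly /Q_lin_times big_cons big_flatten big_map; congr (_ + _).
apply: eq_bigr => k _; rewrite big_map -Lpoly_lin_times /Lpoly mulr_sumr.
by apply: eq_bigr => p _ /=; rewrite mulrA.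
Qed.

Lemma Lpoly_dirichlet_Q_lin_times n b :
  Lpoly_dirichlet n (Q_lin_times n b)
  = 2 * (1 - g%:R) * dirichlet n b
    + \sum_(0 <= k < n.+1)
        (r k * (r k - 1))%:R
        * Lpoly_dirichlet n (lin_times mu c n (decr_at b k)).
Proof.
rewrite /Lpoly_dirichlet /Q_lin_times big_cons big_flatten big_map.
congr (_ + _).
apply: eq_bigr => k _; rewrite big_map mulr_sumr.
by apply: eq_bigr => p _ /=; rewrite mulrA.
Qed.

(* The poles of Q on the facets L_k = 0 with r_k >= 2 cancel against the
   factor L_k of the monomial; the identity fails only on those facets, null
   sets which are therefore removed from the domain. *)
Lemma Qf_pc_Lpoly n b (x : nat -> R) :
  (forall k, (k <= n)%N -> mu k < c) ->
  (forall k, (k <= n)%N -> (2 <= r k)%N -> (0 < b k)%N) ->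
  (if in_simplex n x
   then Qf n r d g c x * (pc_lin mu c n x * Lmonomial n b x) else 0)
  = (if in_simplex_closed_at n (fun k => r k < 2)%N x
     then Lpoly n (Q_lin_times n b) x else 0).
Proof.
move=> hc hb.
have Mdec k : (k <= n)%N -> (2 <= r k)%N ->
    Lmonomial n b x = Lk n k x * Lmonomial n (decr_at b k) x.
  by move=> kn rk; rewrite -Lmonomial_incr_at // incr_at_decr_at // hb.
have [hS|hS] := boolP (in_simplex_closed_at _ _ x).
  have hin : in_simplex n x.
    rewrite in_simplexE; apply/in_simplex_closed_atP => k kn.
    apply: lteif_imply (implybT _) _.
    exact: (elimT (in_simplex_closed_atP _ _ _) hS k kn).
  rewrite hin Lpoly_Q_lin_times /Qf mulrDl; congr (_ + _).
    by rewrite -/(pc_lin mu c n x) mulrA divfK // lt0r_neq0 // pc_lin_gt0.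
  rewrite mulr_suml big_mkcond big_seq [RHS]big_seq; apply: eq_bigr => k.
  rewrite mem_index_iota => /andP[_ kn]; case: ifPn => rk; last first.
    suff -> : (r k * (r k - 1) = 0)%N by rewrite mul0r.
    by move: rk; case: (r k) => [|[|]].
  have := elimT (in_simplex_closed_atP _ _ _) hS k kn; rewrite ltnNge rk /=.
  by move=> /lt0r_neq0 Lk_neq0; rewrite (Mdec k kn rk); field.
case hin: (in_simplex n x) => //.
move: hS; rewrite /in_simplex_closed_at big_all => /allPn[k].
rewrite mem_index_iota => /andP[_ kn].
move: (hin); rewrite in_simplexE => /in_simplex_closed_atP /(_ k kn) /= Lk_ge0.
case: ltnP => rk /=; first by rewrite Lk_ge0.
rewrite lt_neqAle Lk_ge0 andbT negbK => /eqP Lk0.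
by rewrite (Mdec k kn rk) -Lk0 mul0r !mulr0.
Qed.

Lemma Q_boundary_integral m b (w : nat -> R) :
  (forall k, (k <= m.+1)%N -> mu k < c) ->
  (forall k, (k <= m.+1)%N -> (r k * (r k - 1))%:R = w k * (b k)%:R) ->
  (forall k, (k <= m.+1)%N -> b k = 0%N -> w k = 1) ->
  simplex_int m.+1
    (fun x => Qf m.+1 r d g c x * (pc_lin mu c m.+1 x * Lmonomial m.+1 b x))
  + boundary_int m.+1 (fun x => pc_lin mu c m.+1 x * Lmonomial m.+1 b x)
  = 2 * (1 - g%:R) * dirichlet m.+1 b
    + \sum_(0 <= k < m.+2) w k * facet_moment mu c m.+1 b k.
Proof.
move=> hc hw hw1.
have hb k : (k <= m.+1)%N -> (2 <= r k)%N -> (0 < b k)%N.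
  move=> km rk; have : (r k * (r k - 1))%:R != 0 :> R by rewrite pnatr_eq0; nia.
  by rewrite hw // lt0n; apply: contraNneq => ->; rewrite mulr0.
rewrite /simplex_int.
under [X in iint _ X]funext do rewrite (Qf_pc_Lpoly _ _ _ hc hb).
under [X in boundary_int _ X]funext do rewrite -Lpoly_lin_times.
rewrite iint_Lpoly Lpoly_dirichlet_Q_lin_times /boundary_int.
rewrite -addrA -big_split /=.
congr (_ + _); rewrite big_seq [RHS]big_seq; apply: eq_bigr => k.
rewrite mem_index_iota => /andP[_ km]; rewrite facet_int_lin_times //.
have [bk0|bk_gt0] := posnP (b k).
  by rewrite hw // bk0 mulr0 mul0r add0r mul1r hw1 ?mul1r.
by rewrite hw // -mulrA pole_moment // mul0r addr0.
Qed.

End QIntegrand.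

Section ClosedForms.
Context {R : realType}.
Variables (r : nat -> nat) (d : nat -> int) (g : nat) (c : R) (m : nat).
Hypothesis r_gt0 : forall k, (k <= m.+1)%N -> (1 <= r k)%N.
Hypothesis mu_lt_c : forall k, (k <= m.+1)%N -> muk R r d k < c.

Local Notation l := m.+1.
Local Notation mu := (muk R r d).
Local Notation a := (fun k => (r k).-1).
Local Notation rV := (\sum_(0 <= k < l.+1) r k)%N.
Local Notation dV := (\sum_(0 <= k < l.+1) ((d k)%:~R : R)).
Local Notation piR := ((\prod_(0 <= k < l.+1) ((r k).-1)`!)%:R : R).
Local Notation N := (totdeg l a + l)%N.
Local Notation D := (mu_weight mu l a).

Lemma r_predK k : (k <= l)%N -> (r k).-1.+1 = r k.
Proof. by move=> kl; rewrite prednK // r_gt0. Qed.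

Lemma rV_eq : rV = N.+1.
Proof.
rewrite (@eq_big_nat _ _ _ 0 l.+1 r (fun k => (r k).-1 + 1)%N); last first.
  by move=> k /andP[_ kl]; rewrite addn1 r_predK.
by rewrite big_split /= sum_nat_const_nat subn0 muln1 addnS.
Qed.

Lemma r_mu k : (k <= l)%N -> (r k)%:R * mu k = (d k)%:~R.
Proof. by move=> kl; rewrite /muk mulrC divfK // pnatr_eq0 -lt0n r_gt0. Qed.

Lemma dV_eq : dV = D.
Proof.
rewrite /mu_weight big_seq [RHS]big_seq; apply: eq_bigr => k.
by rewrite mem_index_iota => /andP[_ kl]; rewrite r_predK // mulrC r_mu.
Qed.

Lemma sum_r_lin_moment P M E :
  \sum_(0 <= k < l.+1) (r k)%:R * lin_moment c P M (E - mu k)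
  = P%:R / (M`!)%:R * (N.+1%:R * (c * M%:R - E) + dV).
Proof.
rewrite -rV_eq natr_sum mulr_suml -big_split /= mulr_sumr.
rewrite big_seq [RHS]big_seq; apply: eq_bigr => k.
rewrite mem_index_iota /lin_moment => /andP[_ kl].
by rewrite -(r_mu k kl); ring.
Qed.

Lemma x_pc j (x : nat -> R) : (0 < j <= l)%N ->
  x j * pc l r d c x = pc_lin mu c l x * Lmonomial l (incr_at a j) x.
Proof.
by move=> /andP[j0 jl]; rewrite Lmonomial_incr_at // LkE // mulrCA.
Qed.

Lemma alpha0_closed : alpha0 l r d c = piR / (rV`!)%:R * (c * rV%:R - dV).
Proof. by rewrite /alpha0 simplex_int_lin_times rV_eq dV_eq. Qed.

Lemma alpha1_closed j : (0 < j <= l)%N ->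
  alpha1 l r d c j
  = piR / (rV.+1`!)%:R * (r j)%:R * (c * (rV.+1)%:R - dV - mu j).
Proof.
move=> hj; have /andP[_ jl] := hj; rewrite /alpha1.
under [X in simplex_int l X]funext do rewrite x_pc //.
rewrite simplex_int_lin_times /lin_moment factprod_incr_at // totdeg_incr_at //.
by rewrite mu_weight_incr_at // r_predK // rV_eq dV_eq addSn natrM; ring.
Qed.

Lemma alpha2_lin_moment j k : (0 < j <= l)%N -> (0 < k <= l)%N ->
  alpha2 l r d c j k
  = lin_moment c ((incr_at a k j).+1 * (r k * factprod l a))%N N.+3
      (dV + mu k + mu j).
Proof.
move=> hj hk; have /andP[j0 jl] := hj; have /andP[_ kl] := hk; rewrite /alpha2.
under [X in simplex_int l X]funext => x.
  rewrite -mulrA x_pc // mulrCA -(LkE l j x j0) -Lmonomial_incr_at //.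
  over.
rewrite simplex_int_lin_times !factprod_incr_at // !totdeg_incr_at //.
by rewrite !mu_weight_incr_at // r_predK // dV_eq.
Qed.

Lemma alpha2_closed j k : (0 < j <= l)%N -> (0 < k <= l)%N -> j != k ->
  alpha2 l r d c j k
  = piR / (rV.+2`!)%:R * (r j)%:R * (r k)%:R
      * (c * (rV.+2)%:R - dV - mu j - mu k).
Proof.
move=> hj hk jk; rewrite alpha2_lin_moment // /incr_at (negbTE jk).
rewrite r_predK ?(andP hj).2 //.
by rewrite /lin_moment rV_eq !natrM; ring.
Qed.

Lemma alpha2_diag_closed j : (0 < j <= l)%N ->
  alpha2 l r d c j j
  = piR / (rV.+2`!)%:R * (r j)%:R * ((r j).+1)%:R
      * (c * (rV.+2)%:R - dV - 2 * mu j).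
Proof.
move=> hj; rewrite alpha2_lin_moment // /incr_at eqxx r_predK ?(andP hj).2 //.
by rewrite /lin_moment rV_eq !natrM; ring.
Qed.

Lemma beta0_closed :
  beta0 l r d g c
  = piR / ((rV.-1)`!)%:R
    * ((rV%:R - 1) * rV%:R * c + 2 * (1 - g%:R) - (rV%:R - 1) * dV).
Proof.
have -> : beta0 l r d g c = 2 * (1 - g%:R) * dirichlet l a
    + \sum_(0 <= k < l.+1) (r k)%:R * facet_moment mu c l a k.
  apply: Q_boundary_integral => // k kl; first by rewrite -natrM subn1.
  by move=> ak0; rewrite -r_predK // ak0.
rewrite /facet_moment -dV_eq sum_r_lin_moment rV_eq -[N.+1%:R]natr1 /dirichlet.
by rewrite /factprod /=; ring.
Qed.

Lemma beta1_closed j : (0 < j <= l)%N ->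
  beta1 l r d g c j
  = piR * (r j)%:R / (rV`!)%:R
    * (rV%:R * (rV%:R - 1) * c + 2 * (1 - g%:R)
       - dV * (rV%:R - 2) - rV%:R * mu j).
Proof.
move=> hj; have /andP[_ jl] := hj; set b := incr_at a j.
(* The factor x_j raises the exponent of L_j to r_j, hence the weight
   r_j - 1 instead of r_j at k = j. *)
have -> : beta1 l r d g c j = 2 * (1 - g%:R) * dirichlet l b
    + \sum_(0 <= k < l.+1) ((r k)%:R - (k == j)%:R) * facet_moment mu c l b k.
  rewrite /beta1.
  under [X in simplex_int l X]funext do rewrite -mulrA x_pc //.
  under [X in boundary_int l X]funext do rewrite x_pc //.
  apply: Q_boundary_integral => // k kl; rewrite /b /incr_at.
    case: eqP => [->|_]; last by rewrite subr0 -natrM subn1.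
    by rewrite r_predK // natrM natrB ?r_gt0 // mulrC.
  by case: eqP => // _ ak0; rewrite -r_predK // ak0 subr0.
rewrite /facet_moment /dirichlet factprod_incr_at // totdeg_incr_at //.
rewrite mu_weight_incr_at // r_predK // -dV_eq.
rewrite sum_subr_delta // sum_r_lin_moment.
rewrite /lin_moment rV_eq addSn natrM; ring.
Qed.

End ClosedForms.

Theorem proposition3p9 (R : realType) (l : nat) (r : nat -> nat)
  (d : nat -> int) (g : nat) (c : R)
  (hl : (1 <= l)%N)
  (hr : forall k, (k <= l)%N -> (1 <= r k)%N)
  (hc : forall k, (k <= l)%N -> muk R r d k < c) :
  let rV : nat := (\sum_(0 <= k < l.+1) r k)%N in
  let dV : R := \sum_(0 <= k < l.+1) (d k)%:~R in
  let piR : R := (\prod_(0 <= k < l.+1) ((r k).-1)`!)%:R in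
  let mu := muk R r d in
  alpha0 l r d c = piR / (rV`!)%:R * (c * rV%:R - dV)
  /\ (forall j, (1 <= j <= l)%N ->
        alpha1 l r d c j
        = piR / (rV.+1`!)%:R * (r j)%:R * (c * (rV.+1)%:R - dV - mu j))
  /\ (forall j k, (1 <= j <= l)%N -> (1 <= k <= l)%N -> j != k ->
        alpha2 l r d c j k
        = piR / (rV.+2`!)%:R * (r j)%:R * (r k)%:R
            * (c * (rV.+2)%:R - dV - mu j - mu k))
  /\ (forall j, (1 <= j <= l)%N ->
        alpha2 l r d c j j
        = piR / (rV.+2`!)%:R * (r j)%:R * ((r j).+1)%:R
            * (c * (rV.+2)%:R - dV - 2 * mu j))
  /\ beta0 l r d g c
     = piR / ((rV.-1)`!)%:R
       * ((rV%:R - 1) * rV%:R * c + 2 * (1 - g%:R) - (rV%:R - 1) * dV)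
  /\ (forall j, (1 <= j <= l)%N ->
        beta1 l r d g c j
        = piR * (r j)%:R / (rV`!)%:R
          * (rV%:R * (rV%:R - 1) * c + 2 * (1 - g%:R)
             - dV * (rV%:R - 2) - rV%:R * mu j)).
Proof.
case: l hl hr hc => [//|m] _ hr hc /=.
split; first exact: alpha0_closed.
split; first exact: alpha1_closed.
split; first exact: alpha2_closed.
split; first exact: alpha2_diag_closed.
split; first exact: beta0_closed.
exact: beta1_closed.
Qed.
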